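(* Let $n\ge2$ and $\Delta\subset B_n$ a proper ideal such that for every $A\subseteq[1,n]$, $A\in\Delta$ if and only if $[1,n]\setminus A\notin\Delta$. Then $\mathrm{Bier}(B_n,\Delta)$ is centrally symmetric, with involution exchanging the vertex $([\{x\}],[1,n])$-type vertex $(\{x\},[1,n])$ and the vertex $(\emptyset,[1,n]\setminus\{x\})$ for each $x\in[1,n]$.
   Context: $B_n$ is the Boolean lattice of subsets of $[1,n]$. A proper ideal $\Delta\subset B_n$ is a nonempty family of subsets of $[1,n]$ closed under taking subsets with $[1,n]\notin\Delta$. The Bier sphere $\mathrm{Bier}(B_n,\Delta)$ is the simplicial complex whose faces are the pairs $(B,C)$ with $B\subsetneq C\subseteq[1,n]$, $B\in\Delta$, $C\notin\Delta$, with $(B',C')$ a face of $(B,C)$ iff $B'\subseteq B$ and $C\subseteq C'$; its vertices are the pairs $(\{x\},[1,n])$ with $\{x\}\in\Delta$ and $(\emptyset,[1,n]\setminus\{x\})$ with $[1,n]\setminus\{x\}\notin\Delta$. A simplicial complex $\Gamma$ with vertex set $V$ is centrally symmetric if there is a fixed-point-free involution $\alpha$ of $V$ such that $\alpha(F)$ is a face for every face $F$, and $\{v,\alpha(v)\}$ is not a face for every $v\in V$. *)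

From mathcomp Require Import all_boot.
Set Implicit Arguments. Unset Strict Implicit. Unset Printing Implicit Defensive.

(* Ground set [1,n] is represented by 'I_n = {0,...,n-1}; B_n = {set 'I_n}. *)

Definition proper_ideal n (D : {set {set 'I_n}}) : Prop :=
  [/\ D != set0,
      (forall A B : {set 'I_n}, A \subset B -> B \in D -> A \in D)
    & [set: 'I_n] \notin D].

Definition bier_face n (D : {set {set 'I_n}}) (B C : {set 'I_n}) : bool :=
  [&& B \proper C, B \in D & C \notin D].

Definition bier_elt n := ({set 'I_n} * {set 'I_n})%type.

Definition bier_le n (u v : bier_elt n) : bool :=
  (u.1 \subset v.1) && (v.2 \subset u.2).

Definition bier_vertices n (D : {set {set 'I_n}}) : {set bier_elt n} :=
  [set v : bier_elt n |
     [exists x : 'I_n, (v == ([set x], [set: 'I_n])) && ([set x] \in D)]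
  || [exists x : 'I_n, (v == (set0, ~: [set x])) && (~: [set x] \notin D)]].

(* The simplicial complex Bier(B_n, D), as a family of vertex sets: the
   face (B,C) corresponds to the set of vertices lying below it. *)
Definition bier_complex n (D : {set {set 'I_n}}) : {set {set bier_elt n}} :=
  [set F : {set bier_elt n} |
     [exists BC : bier_elt n,
        bier_face D BC.1 BC.2 &&
        (F == [set v in bier_vertices D | bier_le v BC])]].

Definition cs_involution (T : finType) (V : {set T}) (Gamma : {set {set T}})
  (alpha : T -> T) : Prop :=
  [/\ (forall v, v \in V -> alpha v \in V),
      (forall v, v \in V -> alpha (alpha v) = v),
      (forall v, v \in V -> alpha v != v),
      (forall F, F \in Gamma -> alpha @: F \in Gamma)
    & (forall v, v \in V -> [set v; alpha v] \notin Gamma)].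

Definition centrally_symmetric (T : finType) (V : {set T})
  (Gamma : {set {set T}}) : Prop :=
  exists alpha : T -> T, cs_involution V Gamma alpha.

Definition bier_alpha n (v : bier_elt n) : bier_elt n :=
  match [pick x : 'I_n | v == ([set x], [set: 'I_n])] with
  | Some x => (set0, ~: [set x])
  | None =>
    match [pick x : 'I_n | v == (set0, ~: [set x])] with
    | Some x => ([set x], [set: 'I_n])
    | None => v
    end
  end.

From mathcomp Require Import all_boot.

(* For a self-dual D, the map (B, C) |-> (~: C, ~: B) sends faces of
   Bier(B_n, D) to faces, and on vertices it is exactly the exchange of
   ({x}, [1,n]) and (emptyset, [1,n] \ {x}); since it also transports the face
   order, the face spanned below (B, C) goes to the face spanned below
   (~: C, ~: B).  An edge {({x}, [1,n]), (emptyset, [1,n] \ {x})} would need a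
   face (B, C) with x in B and x not in C, impossible as B is contained in C. *)

Section BierAlpha.

Variable n : nat.
Implicit Types (x : 'I_n) (B C : {set 'I_n}).

Lemma bier_alpha_singleton x :
  bier_alpha ([set x], [set: 'I_n]) = (set0, ~: [set x]).
Proof.
rewrite /bier_alpha; case: pickP => [y /eqP [/set1_inj ->] //|/(_ x)].
by rewrite eqxx.
Qed.

Lemma bier_alpha_cosingleton x :
  bier_alpha (set0, ~: [set x]) = ([set x], [set: 'I_n]).
Proof.
rewrite /bier_alpha; case: pickP => [y /eqP [y_set0 _]|_].
  by have := set11 y; rewrite -y_set0 inE.
case: pickP => [y /eqP [/(congr1 (@setC _))]|/(_ x)]; last by rewrite eqxx.
by rewrite !setCK => ->.
Qed.

Lemma subset_setC1 B x : (B \subset ~: [set x]) = (x \notin B).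
Proof. by rewrite -{1}(setCK B) setCS sub1set in_setC. Qed.

Variable D : {set {set 'I_n}}.
Hypothesis selfdual_D : forall A : {set 'I_n}, (A \in D) = (~: A \notin D).

Local Notation V := (bier_vertices D).

Lemma bier_vertexP v : v \in V ->
  exists2 x, [set x] \in D &
    v = ([set x], [set: 'I_n]) \/ v = (set0, ~: [set x]).
Proof.
rewrite inE => /orP[] /existsP[x /andP[/eqP -> Dx]].
  by exists x; [|left].
by exists x; [rewrite selfdual_D|right].
Qed.

Lemma bier_vertex_singleton x :
  [set x] \in D -> ([set x], [set: 'I_n]) \in V.
Proof. by move=> Dx; rewrite inE; apply/orP; left; apply/existsP; exists x; rewrite eqxx. Qed.

Lemma bier_vertex_cosingleton x :
  [set x] \in D -> (set0, ~: [set x]) \in V.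
Proof.
move=> Dx; rewrite inE; apply/orP; right; apply/existsP; exists x.
by rewrite eqxx -selfdual_D.
Qed.

Lemma bier_alpha_vertex v : v \in V -> bier_alpha v \in V.
Proof.
case/bier_vertexP=> x Dx [] ->;
  by rewrite ?bier_alpha_singleton ?bier_alpha_cosingleton
             ?bier_vertex_singleton ?bier_vertex_cosingleton.
Qed.

Lemma bier_alphaK v : v \in V -> bier_alpha (bier_alpha v) = v.
Proof.
case/bier_vertexP=> x _ [] ->;
  by rewrite ?bier_alpha_singleton bier_alpha_cosingleton ?bier_alpha_singleton.
Qed.

Lemma bier_alpha_neq v : v \in V -> bier_alpha v != v.
Proof.
case/bier_vertexP=> x _ [] ->;
  rewrite ?bier_alpha_singleton ?bier_alpha_cosingleton; apply/eqP => -[x_set0 _].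
  by have := set11 x; rewrite -x_set0 inE.
by have := set11 x; rewrite x_set0 inE.
Qed.

Lemma bier_le_alpha v B C : v \in V ->
  bier_le (bier_alpha v) (~: C, ~: B) = bier_le v (B, C).
Proof.
case/bier_vertexP=> x _ [] ->;
  rewrite ?bier_alpha_singleton ?bier_alpha_cosingleton /bier_le /=.
  by rewrite sub0set setCS !sub1set subsetT andbT.
by rewrite (subsetC C) !sub1set subsetT sub0set andbT.
Qed.

Lemma bier_face_dual B C : bier_face D (~: C) (~: B) = bier_face D B C.
Proof.
rewrite /bier_face properC (selfdual_D (~: C)) setCK -selfdual_D.
by rewrite [_ && (B \in D)]andbC.
Qed.

Lemma bier_alpha_span B C :
  @bier_alpha n @: [set v in V | bier_le v (B, C)]
  = [set v in V | bier_le v (~: C, ~: B)].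
Proof.
apply/setP=> v; rewrite [in RHS]inE; apply/imsetP/andP.
  case=> w; rewrite [w \in _]inE => /andP[wV le_w] ->.
  by rewrite bier_alpha_vertex // bier_le_alpha.
case=> vV le_v; exists (bier_alpha v); last by rewrite bier_alphaK.
by rewrite [_ \in _]inE bier_alpha_vertex // -bier_le_alpha ?bier_alpha_vertex ?bier_alphaK.
Qed.

Lemma bier_complex_alpha F :
  F \in bier_complex D -> @bier_alpha n @: F \in bier_complex D.
Proof.
rewrite !inE => /existsP[[B C] /andP[face_BC /eqP ->]].
apply/existsP; exists (~: C, ~: B).
by rewrite /= bier_face_dual face_BC bier_alpha_span eqxx.
Qed.

Lemma bier_alpha_edge_notin v : v \in V -> [set v; bier_alpha v] \notin bier_complex D.
Proof.
move=> vV; rewrite inE; apply/existsP=> -[[B C] /andP[face_BC /eqP span_BC]].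
have below w : w \in [set v; bier_alpha v] -> bier_le w (B, C).
  by rewrite span_BC inE => /andP[].
have le_v := below v (set21 _ _); have le_av := below _ (set22 v (bier_alpha v)).
case/and3P: face_BC => /properP[/subsetP subBC _] _ _.
case/bier_vertexP: vV le_v le_av => x _ [] ->;
  rewrite ?bier_alpha_singleton ?bier_alpha_cosingleton /bier_le /=.
  by rewrite sub1set => /andP[/subBC xC _] /andP[_]; rewrite subset_setC1 xC.
rewrite subset_setC1 sub1set => /andP[_ xNC] /andP[/subBC xC _].
by rewrite xC in xNC.
Qed.

Lemma bier_alpha_cs_involution : cs_involution V (bier_complex D) (@bier_alpha n).
Proof.
split.
- exact: bier_alpha_vertex.
- exact: bier_alphaK.
- exact: bier_alpha_neq.
- exact: bier_complex_alpha.
- exact: bier_alpha_edge_notin.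
Qed.

End BierAlpha.

Theorem proposition15 (n : nat) (D : {set {set 'I_n}}) :
  2 <= n ->
  proper_ideal D ->
  (forall A : {set 'I_n}, (A \in D) = (~: A \notin D)) ->
  centrally_symmetric (bier_vertices D) (bier_complex D) /\
  cs_involution (bier_vertices D) (bier_complex D) (@bier_alpha n).
Proof.
move=> _ _ selfdual_D.
have alpha_cs := @bier_alpha_cs_involution n D selfdual_D.
by split; first exists (@bier_alpha n).
Qed.
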